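(* Let $0<\varepsilon\le\tfrac13$, set $w=\varepsilon$ and $\delta=\dfrac{(1+\varepsilon)(1+w)}{((1+\varepsilon)(1+w)L)^{1/\varepsilon}}$, and run $\textsc{ApproxGeneral}(\varepsilon,\delta,w)$ with any $(1+w)$-approximate oracle $\mathcal{O}$. Then the following hold. (i) $\tau\le m\left\lceil\log_{1+\varepsilon}\frac{(1+\varepsilon)(1+w)}{\delta}\right\rceil$. (ii) $x_\tau/\log_{1+\varepsilon}\frac{(1+\varepsilon)(1+w)}{\delta}$ is a feasible $L$-bounded flow. (iii) The value of this scaled flow is at least $\beta/(1+5\varepsilon)$.
   Context: Let $G=(V,E)$ be a finite directed graph with $m=|E|$, capacities $c:E\to\mathbb{R}_{>0}$, edge lengths $\ell:E\to\mathbb{Z}_{\ge1}$, distinct vertices $s,t$, and a positive integer $L$. Let $\mathcal{P}_L$ be the set of directed simple $s$-$t$ paths $P$ with $\ell(P)=\sum_{e\in P}\ell(e)\le L$, and assume $\mathcal{P}_L\ne\emptyset$. An $L$-bounded flow is a function $x:\mathcal{P}_L\to\mathbb{R}_{\ge0}$, with value $\sum_P x(P)$. It is feasible if $\sum_{P\ni e}x(P)\le c(e)$ for all $e$. For $y:E\to\mathbb{R}_{\ge0}$ let $y(P)=\sum_{e\in P}y(e)$ and $d^L_y(s,t)=\min_{P\in\mathcal{P}_L}y(P)$. Let $\beta$ be the optimum of the LP $\min\{\sum_e c(e)y(e): y\ge0,\ y(P)\ge1\ \forall P\in\mathcal{P}_L\}$, which equals the maximum value of a feasible $L$-bounded flow.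 Logarithms without base are natural. A $(1+w)$-approximate oracle ($w>0$) is a map $\mathcal{O}$ assigning to each $y:E\to\mathbb{R}_{\ge0}$ a path $\mathcal{O}(y)\in\mathcal{P}_L$ with $y(\mathcal{O}(y))\le(1+w)\,d^L_y(s,t)$. Algorithm $\textsc{ApproxGeneral}(\varepsilon,\delta,w)$: - Initialize $i=0$, $y_0\equiv\delta$, and $x_0\equiv0$. Let $\alpha^L(i)=d^L_{y_i}(s,t)$ and $\bar\alpha^L(i)=y_i(\mathcal{O}(y_i))$. - While $\bar\alpha^L(i)<1+w$: - set $i\leftarrow i+1$; - let $P_i=\mathcal{O}(y_{i-1})$ and $c_i=\min_{e\in P_i}c(e)$; - set $x_i=x_{i-1}$ except $x_i(P_i)=x_{i-1}(P_i)+c_i$; - set $y_i(e)=y_{i-1}(e)(1+\varepsilon c_i/c(e))$ for $e\in P_i$, and $y_i(e)=y_{i-1}(e)$ otherwise. - Return $x_i$. $\tau$ is the number of iterations, and $f_i=\sum_Px_i(P)$. *)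

From Stdlib Require Import Reals List.
Import ListNotations.
Open Scope R_scope.

Definition sumR {A : Type} (f : A -> R) (l : list A) : R :=
  fold_right (fun a acc => f a + acc) 0 l.

Section Paths.
Context {V E : Type}.
Variables (src tgt : E -> V) (len : E -> nat).

Fixpoint walk (u : V) (P : list E) (v : V) : Prop :=
  match P with
  | [] => u = v
  | e :: P' => src e = u /\ walk (tgt e) P' v
  end.

Definition simple_path (s t : V) (P : list E) : Prop :=
  walk s P t /\ NoDup (s :: map tgt P).

Definition plen (P : list E) : nat := fold_right (fun e a => (len e + a)%nat) 0%nat P.

Definition inPL (s t : V) (L : nat) (P : list E) : Prop :=
  simple_path s t P /\ (plen P <= L)%nat.
End Paths.

Definition ypath {E : Type} (y : E -> R) (P : list E) : R := sumR y P.

(* min_{e in P} c(e)  (P nonempty in use) *)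
Definition minc {E : Type} (c : E -> R) (P : list E) : R :=
  match P with
  | [] => 0
  | e :: P' => fold_right (fun e' a => Rmin (c e') a) (c e) P'
  end.

(* (1+w)-approximate oracle: for every y >= 0, O y in P_L and
   y(O y) <= (1+w) * d^L_y(s,t) = (1+w) * min_{Q in P_L} y(Q). *)
Definition approx_oracle {E : Type} (PL : list E -> Prop) (w : R)
  (orc : (E -> R) -> list E) : Prop :=
  forall y : E -> R, (forall e, 0 <= y e) ->
    PL (orc y) /\ forall Q, PL Q -> ypath y (orc y) <= (1 + w) * ypath y Q.

Section Algo.
Context {E : Type}.
Variables (eq_dec : forall a b : E, {a = b} + {a <> b}).
Variables (c : E -> R) (orc : (E -> R) -> list E) (eps delta : R).

Fixpoint yseq (i : nat) : E -> R :=
  match i with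
  | O => fun _ => delta
  | S j => fun e =>
      if in_dec eq_dec e (orc (yseq j))
      then yseq j e * (1 + eps * minc c (orc (yseq j)) / c e)
      else yseq j e
  end.

(* P_{j+1} and c_{j+1} : the path / amount added in iteration j+1 *)
Definition Pstep (j : nat) : list E := orc (yseq j).
Definition cstep (j : nat) : R := minc c (Pstep j).

Definition alphabar (i : nat) : R := ypath (yseq i) (orc (yseq i)).

Definition xflow (i : nat) (P : list E) : R :=
  sumR (fun j => if list_eq_dec eq_dec (Pstep j) P then cstep j else 0) (seq 0 i).

(* the while loop stops after exactly tau iterations *)
Definition stops_at (w : R) (tau : nat) : Prop :=
  1 + w <= alphabar tau /\ forall i, (i < tau)%nat -> alphabar i < 1 + w.
End Algo.

Section Flows.
Context {E : Type}.
Variables (eq_dec : forall a b : E, {a = b} + {a <> b}).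
Variables (es : list E) (ps : list (list E)) (c : E -> R).
(* es enumerates the edges, ps enumerates P_L (both duplicate-free) *)

Definition load (x : list E -> R) (e : E) : R :=
  sumR (fun P => if in_dec eq_dec e P then x P else 0) ps.

Definition flow_value (x : list E -> R) : R := sumR x ps.

Definition feasible_Lflow (x : list E -> R) : Prop :=
  (forall P, x P <> 0 -> In P ps) /\
  (forall P, In P ps -> 0 <= x P) /\
  (forall e, load x e <= c e).

Definition dual_feasible (y : E -> R) : Prop :=
  (forall e, 0 <= y e) /\ (forall P, In P ps -> 1 <= ypath y P).

Definition dual_cost (y : E -> R) : R := sumR (fun e => c e * y e) es.

Definition is_LP_opt (beta : R) : Prop :=
  (exists y, dual_feasible y /\ dual_cost y = beta) /\
  (forall y, dual_feasible y -> beta <= dual_cost y).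
End Flows.

Definition log_base (b x : R) : R := ln x / ln b.

Definition ceilR (x : R) : Z := (1 - up (- x))%Z.

(* Multiplicative-weights analysis in the style of Garg and Koenemann.  Every iteration
   multiplies the length of the bottleneck edge of the chosen path by [1 + eps], while all
   lengths stay below [(1 + eps) (1 + w)] as long as the loop runs; the potential
   [sum_e ln (y e / delta)] therefore bounds the number of iterations.  By concavity of [ln],
   routing [c_i] through [e] raises [ln (y e)] by at least [c_i ln (1 + eps) / c e], so the flow
   through [e] is at most [c e log_{1+eps} ((1 + eps) (1 + w) / delta)] and the scaled flow is
   feasible.  Finally, LP duality bounds the shortest-path length by [delta L + D_i / beta],
   where [D_i] is the dual cost of [y_i - delta]; this quantity grows at most by the factor
   [exp (eps (1 + w) c_i / beta)] per iteration, and comparing it with [1 + w <= abar tau]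
   at termination bounds the routed amount from below. *)

From Stdlib Require Import Reals List Lra Lia.
Import ListNotations.
Open Scope R_scope.

Section Sums.
Context {A : Type}.
Implicit Types (f g : A -> R) (l : list A).

Lemma sumR_cons f a l : sumR f (a :: l) = f a + sumR f l.
Proof. reflexivity. Qed.

Lemma sumR_app f l1 l2 : sumR f (l1 ++ l2) = sumR f l1 + sumR f l2.
Proof.
  induction l1 as [|a l1 IH]; [simpl; lra|].
  rewrite <- app_comm_cons, !sumR_cons, IH; ring.
Qed.

Lemma sumR_ext f g l : (forall x, In x l -> f x = g x) -> sumR f l = sumR g l.
Proof.
  induction l as [|a l IH]; intros Hfg; [reflexivity|].
  rewrite !sumR_cons, (Hfg a), IH; [reflexivity| |left; reflexivity].
  intros x Hx; apply Hfg; right; exact Hx.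
Qed.

Lemma sumR_le f g l : (forall x, In x l -> f x <= g x) -> sumR f l <= sumR g l.
Proof.
  induction l as [|a l IH]; intros Hfg; [simpl; lra|].
  rewrite !sumR_cons.
  apply Rplus_le_compat; [apply Hfg; left; reflexivity|].
  apply IH; intros x Hx; apply Hfg; right; exact Hx.
Qed.

Lemma sumR_plus f g l : sumR (fun x => f x + g x) l = sumR f l + sumR g l.
Proof. induction l as [|a l IH]; [simpl; lra|]. rewrite !sumR_cons, IH; ring. Qed.

Lemma sumR_scal f k l : sumR (fun x => k * f x) l = k * sumR f l.
Proof. induction l as [|a l IH]; [simpl; lra|]. rewrite !sumR_cons, IH; ring. Qed.

Lemma sumR_const k l : sumR (fun _ => k) l = INR (length l) * k.
Proof.
  induction l as [|a l IH]; [simpl; lra|].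
  rewrite sumR_cons, IH; cbn [length]; rewrite S_INR; ring.
Qed.

Lemma sumR_zero l : sumR (fun _ => 0) l = 0.
Proof. rewrite sumR_const; ring. Qed.

Lemma sumR_nonneg f l : (forall x, In x l -> 0 <= f x) -> 0 <= sumR f l.
Proof. intros Hf. rewrite <- (sumR_zero l). apply sumR_le; exact Hf. Qed.

Lemma sumR_elem f l x : (forall y, In y l -> 0 <= f y) -> In x l -> f x <= sumR f l.
Proof.
  induction l as [|a l IH]; intros Hf Hx; [destruct Hx|].
  rewrite sumR_cons.
  assert (Hf' : forall y, In y l -> 0 <= f y) by (intros y Hy; apply Hf; right; exact Hy).
  destruct Hx as [<-|Hx].
  - pose proof (sumR_nonneg f l Hf'); lra.
  - pose proof (IH Hf' Hx); pose proof (Hf a (or_introl eq_refl)); lra.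
Qed.

Lemma sumR_le_bump f g l b r :
  (forall x, In x l -> f x <= g x) -> In b l -> f b + r <= g b ->
  sumR f l + r <= sumR g l.
Proof.
  intros Hfg Hb Hr.
  induction l as [|a l IH]; [destruct Hb|]. rewrite !sumR_cons.
  assert (Hfg' : forall x, In x l -> f x <= g x) by (intros x Hx; apply Hfg; right; exact Hx).
  destruct Hb as [<-|Hb].
  - pose proof (sumR_le f g l Hfg'); lra.
  - pose proof (IH Hfg' Hb); pose proof (Hfg a (or_introl eq_refl)); lra.
Qed.

Lemma sumR_pos f l : 0 < sumR f l -> exists x, In x l /\ 0 < f x.
Proof.
  induction l as [|a l IH]; intros Hpos; [simpl in Hpos; lra|].
  rewrite sumR_cons in Hpos.
  destruct (Rlt_dec 0 (f a)) as [Ha|Ha]; [exists a; split; [left|]; auto|].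
  destruct IH as [x [Hx Hfx]]; [lra|]. exists x; split; [right|]; auto.
Qed.

Lemma sumR_filter (b : A -> bool) f l :
  sumR (fun x => if b x then f x else 0) l = sumR f (filter b l).
Proof.
  induction l as [|a l IH]; [reflexivity|].
  cbn [filter]; rewrite sumR_cons, IH; destruct (b a); [rewrite sumR_cons|]; ring.
Qed.

Lemma sumR_incl f l1 l2 :
  (forall x, 0 <= f x) -> NoDup l1 -> incl l1 l2 -> sumR f l1 <= sumR f l2.
Proof.
  intros Hf. revert l2.
  induction l1 as [|a l1 IH]; intros l2 Hnd Hincl; [apply sumR_nonneg; auto|].
  apply NoDup_cons_iff in Hnd as [Ha Hnd].
  destruct (in_split a l2 (Hincl a (or_introl eq_refl))) as [u [v ->]].
  assert (Hl1 : sumR f l1 <= sumR f (u ++ v)).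
  { apply IH; [exact Hnd|]. intros x Hx.
    assert (Hx' : In x (u ++ a :: v)) by (apply Hincl; right; exact Hx).
    apply in_app_or in Hx' as [Hx'|[<-|Hx']]; apply in_or_app; auto. contradiction. }
  rewrite sumR_app in Hl1. rewrite sumR_cons, sumR_app, sumR_cons. lra.
Qed.

End Sums.

Lemma sumR_swap {A B} (h : A -> B -> R) la lb :
  sumR (fun a => sumR (fun b => h a b) lb) la = sumR (fun b => sumR (fun a => h a b) la) lb.
Proof.
  induction la as [|a la IH].
  - symmetry. transitivity (sumR (fun _ : B => 0) lb); [apply sumR_ext; reflexivity|apply sumR_zero].
  - rewrite sumR_cons, IH, <- sumR_plus. apply sumR_ext; intros; rewrite sumR_cons; ring.
Qed.

Lemma sumR_indicator_le {A} (D : forall x y : A, {x = y} + {x <> y}) (f : A -> R) (l P : list A) :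
  (forall x, 0 <= f x) -> NoDup l -> sumR (fun x => if in_dec D x P then f x else 0) l <= sumR f P.
Proof.
  intros Hf Hnd.
  rewrite (sumR_ext _ (fun x => if (if in_dec D x P then true else false) then f x else 0))
    by (intros x _; destruct (in_dec D x P); reflexivity).
  rewrite sumR_filter. apply sumR_incl; [exact Hf|apply NoDup_filter; exact Hnd|].
  intros x Hx. apply filter_In in Hx as [_ Hx]. destruct (in_dec D x P); [assumption|discriminate].
Qed.

Lemma sumR_indicator_single {A} (D : forall x y : A, {x = y} + {x <> y}) (a : A) (v : R) l :
  NoDup l -> In a l -> sumR (fun x => if D a x then v else 0) l = v.
Proof.
  induction l as [|b l IH]; intros Hnd Ha; [destruct Ha|].
  apply NoDup_cons_iff in Hnd as [Hb Hnd]. rewrite sumR_cons.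
  destruct (D a b) as [<-|Hab].
  - rewrite (sumR_ext _ (fun _ => 0)); [rewrite sumR_zero; ring|].
    intros x Hx; destruct (D a x) as [<-|]; [contradiction|reflexivity].
  - destruct Ha as [->|Ha]; [contradiction|]. rewrite IH; auto; ring.
Qed.

Lemma sumR_regroup {I B} (D : forall x y : B, {x = y} + {x <> y}) (bs : list B)
  (wt : B -> R) (g : I -> B) (v : I -> R) (J : list I) :
  NoDup bs -> (forall j, In (g j) bs) ->
  sumR (fun b => wt b * sumR (fun j => if D (g j) b then v j else 0) J) bs
  = sumR (fun j => wt (g j) * v j) J.
Proof.
  intros Hnd Hg.
  rewrite (sumR_ext _ (fun b => sumR (fun j => wt b * (if D (g j) b then v j else 0)) J))
    by (intros; rewrite sumR_scal; reflexivity).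
  rewrite sumR_swap. apply sumR_ext. intros j _.
  rewrite (sumR_ext _ (fun b => if D (g j) b then wt (g j) * v j else 0)).
  - apply sumR_indicator_single; auto.
  - intros b _. destruct (D (g j) b) as [<-|]; [reflexivity|ring].
Qed.

Lemma ln_le x y : 0 < x -> x <= y -> ln x <= ln y.
Proof. intros Hx [Hxy|<-]; [left; apply ln_increasing; assumption|right; reflexivity]. Qed.

Lemma ln_1_plus_pos x : 0 < x -> 0 < ln (1 + x).
Proof. intros Hx. rewrite <- ln_1. apply ln_increasing; lra. Qed.

Lemma ln_le_sub_1 x : 0 < x -> ln x <= x - 1.
Proof. intros Hx. pose proof (exp_ineq1_le (ln x)) as H. rewrite exp_ln in H; lra. Qed.

Lemma ln_tangent x p : 0 < x -> 0 < p -> ln x <= ln p + (x - p) / p.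
Proof.
  intros Hx Hp.
  assert (Hxp : ln x - ln p = ln (x / p)).
  { unfold Rdiv. rewrite ln_mult, ln_Rinv; [ring|lra|lra|apply Rinv_0_lt_compat; lra]. }
  pose proof (ln_le_sub_1 (x / p) ltac:(apply Rdiv_lt_0_compat; lra)) as H.
  replace ((x - p) / p) with (x / p - 1) by (field; lra). lra.
Qed.

Lemma ln_1_plus_ge x : 0 <= x -> x / (1 + x) <= ln (1 + x).
Proof.
  intros Hx. pose proof (ln_tangent 1 (1 + x) ltac:(lra) ltac:(lra)) as H.
  rewrite ln_1 in H. replace ((1 - (1 + x)) / (1 + x)) with (- (x / (1 + x))) in H by (field; lra).
  lra.
Qed.

(* Average the tangent-line bounds at [1 + a eps] for the points [1] and [1 + eps]. *)
Lemma ln_1_plus_concave eps a : 0 < eps -> 0 <= a <= 1 -> a * ln (1 + eps) <= ln (1 + a * eps).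
Proof.
  intros Heps Ha.
  assert (Hae : 0 <= a * eps) by (apply Rmult_le_pos; lra).
  set (p := 1 + a * eps).
  assert (Hp : 0 < p) by (unfold p; lra).
  pose proof (ln_tangent 1 p ltac:(lra) Hp) as H1.
  pose proof (ln_tangent (1 + eps) p ltac:(lra) Hp) as H2.
  rewrite ln_1 in H1.
  assert (Hcomb : (1 - a) * ((1 - p) / p) + a * ((1 + eps - p) / p) = 0)
    by (unfold p; field; apply Rgt_not_eq; lra).
  apply (Rmult_le_compat_l (1 - a)) in H1; [|lra].
  apply (Rmult_le_compat_l a) in H2; [|lra].
  lra.
Qed.

Lemma growth_le_exp (B a : nat -> R) n :
  (forall i, 0 <= B i) -> (forall i, B (S i) <= B i * (1 + a i)) ->
  B n <= B O * exp (sumR a (seq 0 n)).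
Proof.
  intros HB Hstep. induction n as [|n IH].
  - simpl; rewrite exp_0; lra.
  - rewrite seq_S, sumR_app, sumR_cons. change (sumR a []) with 0.
    rewrite Rplus_0_r, exp_plus. simpl (0 + n)%nat.
    pose proof (exp_ineq1_le (a n)). pose proof (exp_pos (a n)).
    pose proof (Hstep n). pose proof (HB n).
    apply Rle_trans with (B n * exp (a n)); [nra|].
    rewrite <- Rmult_assoc. apply Rmult_le_compat_r; lra.
Qed.

Lemma ceilR_ge x : x <= IZR (ceilR x).
Proof. unfold ceilR. rewrite minus_IZR. destruct (archimed (- x)). simpl; lra. Qed.

Lemma nat_first_or_none (Pr : nat -> Prop) (dec : forall n, {Pr n} + {~ Pr n}) N :
  (forall i, (i < N)%nat -> ~ Pr i) \/ exists n, Pr n /\ forall i, (i < n)%nat -> ~ Pr i.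
Proof.
  induction N as [|N [Hnone|Hfirst]]; [left; intros; lia| |right; exact Hfirst].
  destruct (dec N) as [HN|HN]; [right; exists N; auto|left].
  intros i Hi. destruct (Nat.eq_dec i N) as [->|]; [exact HN|apply Hnone; lia].
Qed.

Lemma fold_Rmin_spec {E} (c : E -> R) (init : R) (l : list E) :
  let m := fold_right (fun e a => Rmin (c e) a) init l in
  m <= init /\ (forall x, In x l -> m <= c x) /\ (m = init \/ exists x, In x l /\ m = c x).
Proof.
  induction l as [|a l [Hinit [Hle Hat]]]; simpl; [split; [lra|split; [tauto|left; reflexivity]]|].
  set (m := fold_right _ init l) in *.
  pose proof (Rmin_l (c a) m). pose proof (Rmin_r (c a) m).
  split; [lra|split].
  - intros x [<-|Hx]; [lra|]. apply Rle_trans with m; auto.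
  - unfold Rmin; destruct (Rle_dec (c a) m); [right; exists a; auto|].
    destruct Hat as [Hat|[x [Hx Hmx]]]; [left; exact Hat|right; exists x; auto].
Qed.

Lemma minc_le {E} (c : E -> R) P e : In e P -> minc c P <= c e.
Proof.
  destruct P as [|a P]; [intros []|]. destruct (fold_Rmin_spec c (c a) P) as [Hinit [Hle _]].
  intros [<-|He]; simpl; auto.
Qed.

Lemma minc_attained {E} (c : E -> R) P : P <> [] -> exists e, In e P /\ minc c P = c e.
Proof.
  destruct P as [|a P]; [congruence|]. intros _.
  destruct (fold_Rmin_spec c (c a) P) as [_ [_ [Hat|[x [Hx Hmx]]]]].
  - exists a; split; [left|]; auto.
  - exists x; split; [right|]; auto.
Qed.

Lemma minc_nonneg {E} (c : E -> R) P : (forall e, 0 < c e) -> 0 <= minc c P.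
Proof.
  intros Hc. destruct P as [|a P]; [simpl; lra|].
  destruct (minc_attained c (a :: P)) as [e [_ ->]]; [discriminate|left; apply Hc].
Qed.

Lemma list_argmin {A} (f : A -> R) l :
  l <> [] -> exists x, In x l /\ forall y, In y l -> f x <= f y.
Proof.
  induction l as [|a [|b l] IH]; intros Hne; [congruence| |].
  - exists a; split; [left; reflexivity|]. intros y [<-|[]]; lra.
  - destruct IH as [x [Hx Hmin]]; [discriminate|].
    destruct (Rle_dec (f a) (f x)) as [Hax|Hax].
    + exists a; split; [left; reflexivity|]. intros y [<-|Hy]; [lra|]. specialize (Hmin y Hy); lra.
    + exists x; split; [right; exact Hx|]. intros y [<-|Hy]; [lra|auto].
Qed.

Section Duality.
Context {E : Type}.
Variables (es : list E) (ps : list (list E)) (c : E -> R) (beta : R).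
Hypothesis Hes_full : forall e, In e es.
Hypothesis Hc : forall e, 0 < c e.
Hypothesis Hbeta : is_LP_opt es ps c beta.
Hypothesis Hps_ne : ps <> [].

Lemma LP_opt_pos : 0 < beta.
Proof.
  destruct Hbeta as [[y [[Hy0 Hy1] <-]] _].
  destruct ps as [|P0 ps'] eqn:Hps; [congruence|].
  destruct (sumR_pos y P0) as [e [_ He]].
  { pose proof (Hy1 P0 (or_introl eq_refl)); unfold ypath in *; lra. }
  apply Rlt_le_trans with (c e * y e); [apply Rmult_lt_0_compat; auto|].
  apply (sumR_elem (fun e => c e * y e)); auto.
  intros x _; apply Rmult_le_pos; [left; apply Hc|apply Hy0].
Qed.

(* Rescaled to shortest-path length 1, [z] is dual feasible. *)
Lemma LP_opt_shortest_path_le (z : E -> R) : (forall e, 0 <= z e) ->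
  exists Q, In Q ps /\ beta * ypath z Q <= dual_cost es c z.
Proof.
  intros Hz. destruct (list_argmin (ypath z) ps Hps_ne) as [Q [HQ Hmin]].
  exists Q; split; [exact HQ|].
  assert (Hcost : 0 <= dual_cost es c z)
    by (apply sumR_nonneg; intros e _; apply Rmult_le_pos; [left; apply Hc|apply Hz]).
  set (m := ypath z Q) in *.
  assert (Hm : 0 <= m) by (apply sumR_nonneg; auto).
  destruct Hm as [Hm|<-]; [|lra].
  assert (Hscale : forall (f : E -> R) l, sumR (fun e => f e / m) l = sumR f l / m).
  { intros f l. unfold Rdiv. rewrite (sumR_ext _ (fun e => / m * f e)) by (intros; ring).
    rewrite sumR_scal; ring. }
  assert (Hfeas : dual_feasible ps (fun e => z e / m)).
  { split.
    - intros e. unfold Rdiv; apply Rmult_le_pos; [apply Hz|left; apply Rinv_0_lt_compat; exact Hm].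
    - intros P HP. unfold ypath; rewrite Hscale.
      apply (Rmult_le_reg_r m); [exact Hm|]. field_simplify; [apply Hmin; exact HP|lra]. }
  pose proof (proj2 Hbeta _ Hfeas) as Hb.
  unfold dual_cost in Hb. rewrite (sumR_ext _ (fun e => c e * z e / m)) in Hb by (intros; unfold Rdiv; ring).
  rewrite Hscale in Hb. fold (dual_cost es c z) in Hb.
  apply (Rmult_le_reg_r (/ m)); [apply Rinv_0_lt_compat; exact Hm|].
  replace (beta * m * / m) with beta by (field; lra). exact Hb.
Qed.

End Duality.

Section LengthBoundedPaths.
Context {V E : Type}.
Variables (src tgt : E -> V) (len : E -> nat) (s t : V) (L : nat).

Lemma inPL_length P : (forall e, (1 <= len e)%nat) -> inPL src tgt len s t L P -> (length P <= L)%nat.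
Proof.
  intros Hlen [_ HP]. enough (length P <= plen len P)%nat by lia.
  clear HP. induction P as [|e P IH]; [simpl; lia|].
  change (plen len (e :: P)) with (len e + plen len P)%nat. simpl length.
  specialize (Hlen e). lia.
Qed.

Lemma inPL_nonempty P : s <> t -> inPL src tgt len s t L P -> P <> [].
Proof. intros Hst [[Hwalk _] _] ->. exact (Hst Hwalk). Qed.

End LengthBoundedPaths.

(* [delta] is chosen so that [ln (C / delta)] and [- ln (delta L)] are both proportional
   to [ln (C L)], which makes the final ratio independent of [L]. *)
Lemma delta_choice (C eps delta : R) (L : nat) :
  1 < C -> 0 < eps -> (1 <= L)%nat -> delta = C / Rpower (C * INR L) (1 / eps) ->
  0 < delta /\ delta < C /\ 0 < ln (C * INR L) /\ ln (C / delta) = ln (C * INR L) / eps /\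
  ln (delta * INR L) = ln (C * INR L) - ln (C * INR L) / eps.
Proof.
  intros HC Heps HL Hd.
  assert (HLr : 1 <= INR L) by (apply (le_INR 1); exact HL).
  set (X := C * INR L) in *. set (Q := Rpower X (1 / eps)) in *.
  assert (HX : 1 < X) by (unfold X; nra).
  assert (HlnX : 0 < ln X) by (rewrite <- ln_1; apply ln_increasing; lra).
  assert (HlnQ : ln Q = ln X / eps) by (unfold Q; rewrite ln_Rpower; field; lra).
  assert (HQ : 1 < Q).
  { unfold Q, Rpower. rewrite <- exp_0 at 1. apply exp_increasing.
    apply Rmult_lt_0_compat; [apply Rdiv_lt_0_compat|]; lra. }
  assert (Hd0 : 0 < delta) by (rewrite Hd; apply Rdiv_lt_0_compat; lra).
  split; [exact Hd0|split; [|split; [exact HlnX|split]]].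
  - rewrite Hd. apply (Rmult_lt_reg_r Q); [lra|]. field_simplify; nra.
  - replace (C / delta) with Q by (rewrite Hd; field; lra). exact HlnQ.
  - replace (delta * INR L) with (X * / Q) by (rewrite Hd; unfold X; field; lra).
    rewrite ln_mult, ln_Rinv, HlnQ; [ring|lra|lra|apply Rinv_0_lt_compat; lra].
Qed.

Lemma scaled_value_bound beta eps lnX f :
  0 < beta -> 0 < eps <= 1 / 3 -> 0 < lnX ->
  beta * (lnX / eps - lnX) <= eps * (1 + eps) * f ->
  beta / (1 + 5 * eps) <= f / (lnX / eps / ln (1 + eps)).
Proof.
  intros Hb Heps HlnX Hf.
  set (r := ln (1 + eps)).
  assert (Hr : eps / (1 + eps) <= r) by (apply ln_1_plus_ge; lra).
  assert (Hr' : eps <= r * (1 + eps)).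
  { apply (Rmult_le_compat_r (1 + eps)) in Hr; [|lra].
    replace (eps / (1 + eps) * (1 + eps)) with eps in Hr by (field; lra). exact Hr. }
  assert (Hr0 : 0 < r) by nra.
  assert (Hf' : beta * (1 - eps) * lnX <= eps * eps * (1 + eps) * f).
  { apply (Rmult_le_compat_l eps) in Hf; [|lra].
    replace (eps * (beta * (lnX / eps - lnX))) with (beta * (1 - eps) * lnX) in Hf by (field; lra).
    lra. }
  assert (Hf0 : 0 <= f).
  { assert (0 < beta * (1 - eps) * lnX) by (apply Rmult_lt_0_compat; [apply Rmult_lt_0_compat|]; lra).
    assert (0 < eps * eps * (1 + eps)) by (apply Rmult_lt_0_compat; [apply Rmult_lt_0_compat|]; lra).
    destruct (Rle_dec 0 f); [assumption|nra]. }
  replace (f / (lnX / eps / r)) with (f * eps * r / lnX) by (field; repeat split; lra).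
  apply Rle_trans with (beta * (1 - eps) / ((1 + eps) * (1 + eps))).
  - assert (Hq : (1 + eps) * (1 + eps) <= (1 - eps) * (1 + 5 * eps)) by nra.
    apply (Rmult_le_reg_r ((1 + 5 * eps) * ((1 + eps) * (1 + eps)))); [nra|].
    field_simplify; [nra|lra|lra].
  - apply (Rmult_le_reg_r (lnX * ((1 + eps) * (1 + eps)))); [nra|].
    field_simplify; [|lra|lra].
    assert (f * eps * eps <= f * eps * (r * (1 + eps))) by
      (apply Rmult_le_compat_l; [apply Rmult_le_pos|]; lra).
    nra.
Qed.

Section ApproxGeneral.
Context {E : Type}.
Variable eq_dec : forall a b : E, {a = b} + {a <> b}.
Variables (es : list E) (c : E -> R) (orc : (E -> R) -> list E) (eps w delta : R).
Hypothesis Hes_nodup : NoDup es.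
Hypothesis Hes_full : forall e, In e es.
Hypothesis Hc : forall e, 0 < c e.
Hypothesis Heps : 0 < eps.
Hypothesis Hdelta : 0 < delta.

Local Notation Y := (yseq eq_dec c orc eps delta).
Local Notation Pst := (Pstep eq_dec c orc eps delta).
Local Notation cst := (cstep eq_dec c orc eps delta).
Local Notation abar := (alphabar eq_dec c orc eps delta).

Lemma yseq_S i e :
  Y (S i) e = if in_dec eq_dec e (Pst i) then Y i e * (1 + eps * cst i / c e) else Y i e.
Proof. reflexivity. Qed.

Lemma cstep_ratio i e : In e (Pst i) -> 0 <= cst i / c e <= 1.
Proof.
  intros He. pose proof (Hc e). pose proof (minc_le c _ _ He : cst i <= c e).
  pose proof (minc_nonneg c (Pst i) Hc : 0 <= cst i).
  split; [unfold Rdiv; apply Rmult_le_pos; [lra|left; apply Rinv_0_lt_compat; lra]|].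
  apply (Rmult_le_reg_r (c e)); [lra|]. field_simplify; lra.
Qed.

Lemma step_factor_bounds i e : In e (Pst i) -> 1 <= 1 + eps * cst i / c e <= 1 + eps.
Proof.
  intros He. pose proof (cstep_ratio i e He).
  replace (eps * cst i / c e) with (eps * (cst i / c e)) by (unfold Rdiv; ring). nra.
Qed.

Lemma yseq_ge_delta i e : delta <= Y i e.
Proof.
  induction i as [|i IH]; [simpl; lra|]. rewrite yseq_S.
  destruct (in_dec eq_dec e (Pst i)) as [He|]; [|exact IH].
  pose proof (step_factor_bounds i e He). nra.
Qed.

Lemma yseq_le_S i e : Y i e <= Y (S i) e.
Proof.
  rewrite yseq_S. destruct (in_dec eq_dec e (Pst i)) as [He|]; [|lra].
  pose proof (step_factor_bounds i e He). pose proof (yseq_ge_delta i e). nra.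
Qed.

Lemma yseq_nonneg i e : 0 <= Y i e.
Proof. pose proof (yseq_ge_delta i e); lra. Qed.

Lemma yseq_ratio_pos i e : 0 < Y i e / delta.
Proof. pose proof (yseq_ge_delta i e). apply Rdiv_lt_0_compat; lra. Qed.

Definition running (n : nat) : Prop := forall i, (i < n)%nat -> abar i < 1 + w.

Lemma stops_at_running tau : stops_at eq_dec c orc eps delta w tau -> running tau.
Proof. intros [_ H]; exact H. Qed.

Hypothesis Hdelta_lt : delta < (1 + eps) * (1 + w).

(* An edge on [P_i] has length at most [abar i < 1 + w] before it is scaled by at most [1 + eps]. *)
Lemma yseq_lt_running n : running n ->
  forall i, (i <= n)%nat -> forall e, Y i e < (1 + eps) * (1 + w).
Proof.
  intros Hrun i. induction i as [|i IH]; intros Hi e; [exact Hdelta_lt|].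
  rewrite yseq_S. destruct (in_dec eq_dec e (Pst i)) as [He|]; [|apply IH; lia].
  assert (Hy : Y i e <= abar i)
    by (apply (sumR_elem (Y i)); [intros; apply yseq_nonneg|exact He]).
  pose proof (Hrun i ltac:(lia)). pose proof (step_factor_bounds i e He).
  pose proof (yseq_ge_delta i e). nra.
Qed.

Hypothesis Hpaths_nonempty : forall i, Pst i <> [].

Definition potential (i : nat) : R := sumR (fun e => ln (Y i e / delta)) es.

(* The bottleneck edge of [P_i] is scaled by exactly [1 + eps]. *)
Lemma potential_S i : potential i + ln (1 + eps) <= potential (S i).
Proof.
  destruct (minc_attained c (Pst i) (Hpaths_nonempty i)) as [b [Hb Hcb]].
  apply sumR_le_bump with b; [|apply Hes_full|].
  - intros e _. apply ln_le; [apply yseq_ratio_pos|].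
    apply Rmult_le_compat_r; [left; apply Rinv_0_lt_compat; exact Hdelta|apply yseq_le_S].
  - rewrite yseq_S. destruct (in_dec eq_dec b (Pst i)) as [_|]; [|contradiction].
    change (minc c (Pst i)) with (cst i) in Hcb. rewrite Hcb.
    replace (Y i b * (1 + eps * c b / c b) / delta) with (Y i b / delta * (1 + eps))
      by (pose proof (Hc b); field; lra).
    rewrite ln_mult; [lra| |lra]. apply yseq_ratio_pos.
Qed.

Lemma potential_ge i : INR i * ln (1 + eps) <= potential i.
Proof.
  induction i as [|i IH].
  - unfold potential. rewrite (sumR_ext _ (fun _ => 0)); [rewrite sumR_zero; simpl; lra|].
    intros e _. simpl. rewrite Rdiv_diag by lra. apply ln_1.
  - rewrite S_INR. pose proof (potential_S i). lra.
Qed.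

Lemma potential_le_running n : running n ->
  potential n <= INR (length es) * ln ((1 + eps) * (1 + w) / delta).
Proof.
  intros Hrun. unfold potential. rewrite <- sumR_const. apply sumR_le. intros e _.
  apply ln_le; [apply yseq_ratio_pos|].
  apply Rmult_le_compat_r; [left; apply Rinv_0_lt_compat; exact Hdelta|].
  left; apply (yseq_lt_running n Hrun); lia.
Qed.

Lemma iterations_bound n : running n ->
  INR n * ln (1 + eps) <= INR (length es) * ln ((1 + eps) * (1 + w) / delta).
Proof.
  intros Hrun. pose proof (potential_ge n). pose proof (potential_le_running n Hrun). lra.
Qed.

Lemma approx_general_stops : exists tau, stops_at eq_dec c orc eps delta w tau.
Proof.
  pose proof (ln_1_plus_pos eps Heps) as Hr.
  set (bound := INR (length es) * ln ((1 + eps) * (1 + w) / delta)).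
  destruct (INR_unbounded (bound / ln (1 + eps))) as [N HN].
  destruct (nat_first_or_none (fun n => 1 + w <= abar n) (fun n => Rle_dec (1 + w) (abar n)) N)
    as [Hnone|[tau [Hstop Hbefore]]].
  - exfalso. assert (Hrun : running N) by (intros i Hi; apply Rnot_le_lt, Hnone, Hi).
    pose proof (iterations_bound N Hrun) as Hit. fold bound in Hit.
    apply (Rmult_lt_compat_r (ln (1 + eps))) in HN; [|exact Hr].
    replace (bound / ln (1 + eps) * ln (1 + eps)) with bound in HN by (field; lra). lra.
  - exists tau. split; [exact Hstop|]. intros i Hi; apply Rnot_le_lt, Hbefore, Hi.
Qed.

Lemma iterations_le_ceil tau : stops_at eq_dec c orc eps delta w tau ->
  INR tau <= INR (length es) * IZR (ceilR (log_base (1 + eps) ((1 + eps) * (1 + w) / delta))).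
Proof.
  intros Hstop. set (K := log_base _ _).
  pose proof (ln_1_plus_pos eps Heps) as Hr.
  pose proof (iterations_bound tau (stops_at_running tau Hstop)) as Hit.
  apply Rle_trans with (INR (length es) * K).
  - apply (Rmult_le_reg_r (ln (1 + eps))); [exact Hr|].
    unfold K, log_base. replace (INR (length es) * (ln ((1 + eps) * (1 + w) / delta) / ln (1 + eps)) * ln (1 + eps))
      with (INR (length es) * ln ((1 + eps) * (1 + w) / delta)) by (field; lra). exact Hit.
  - apply Rmult_le_compat_l; [apply pos_INR|apply ceilR_ge].
Qed.

Definition edge_flow (i : nat) (e : E) : R :=
  sumR (fun j => if in_dec eq_dec e (Pst j) then cst j else 0) (seq 0 i).

Lemma edge_flow_le i e : edge_flow i e * ln (1 + eps) <= c e * ln (Y i e / delta).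
Proof.
  induction i as [|i IH].
  - change (edge_flow 0 e) with 0. simpl. rewrite Rdiv_diag, ln_1 by lra. lra.
  - unfold edge_flow. rewrite seq_S, sumR_app, sumR_cons. change (sumR ?f []) with 0.
    fold (edge_flow i e). simpl (0 + i)%nat. rewrite yseq_S.
    destruct (in_dec eq_dec e (Pst i)) as [He|]; [|lra].
    pose proof (Hc e) as Hce. pose proof (yseq_ge_delta i e).
    set (a := cst i / c e). pose proof (cstep_ratio i e He) as Ha. fold a in Ha.
    assert (Hae : 0 <= a * eps) by (apply Rmult_le_pos; lra).
    replace (Y i e * (1 + eps * cst i / c e) / delta) with (Y i e / delta * (1 + a * eps))
      by (unfold a; field; lra).
    rewrite ln_mult; [|apply Rdiv_lt_0_compat; lra|lra].
    pose proof (ln_1_plus_concave eps a Heps Ha) as Hconc.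
    replace (cst i) with (c e * a) by (unfold a; field; lra).
    apply (Rmult_le_compat_l (c e)) in Hconc; lra.
Qed.

Lemma edge_flow_le_capacity n e : running n ->
  edge_flow n e <= c e * log_base (1 + eps) ((1 + eps) * (1 + w) / delta).
Proof.
  intros Hrun. pose proof (Hc e).
  pose proof (ln_1_plus_pos eps Heps) as Hr.
  assert (Hln : ln (Y n e / delta) <= ln ((1 + eps) * (1 + w) / delta)).
  { apply ln_le; [apply yseq_ratio_pos|].
    apply Rmult_le_compat_r; [left; apply Rinv_0_lt_compat; exact Hdelta|].
    left; apply (yseq_lt_running n Hrun); lia. }
  apply (Rmult_le_reg_r (ln (1 + eps))); [exact Hr|].
  unfold log_base. replace (c e * (ln ((1 + eps) * (1 + w) / delta) / ln (1 + eps)) * ln (1 + eps))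
    with (c e * ln ((1 + eps) * (1 + w) / delta)) by (field; lra).
  pose proof (edge_flow_le n e).
  apply (Rmult_le_compat_l (c e)) in Hln; lra.
Qed.

Local Notation x := (xflow eq_dec c orc eps delta).

Variable ps : list (list E).
Hypothesis Hps_nodup : NoDup ps.
Hypothesis Hpaths_in : forall i, In (Pst i) ps.

Lemma load_scaled_xflow n K e :
  load eq_dec ps (fun Q => x n Q / K) e = edge_flow n e / K.
Proof.
  unfold load.
  rewrite (sumR_ext _ (fun Q => (if in_dec eq_dec e Q then / K else 0) *
             sumR (fun j => if list_eq_dec eq_dec (Pst j) Q then cst j else 0) (seq 0 n)))
    by (intros Q _; destruct (in_dec eq_dec e Q); unfold xflow, Rdiv; ring).
  rewrite sumR_regroup by assumption.
  unfold edge_flow, Rdiv. rewrite Rmult_comm, <- sumR_scal. apply sumR_ext.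
  intros j _. destruct (in_dec eq_dec e (Pst j)); ring.
Qed.

Lemma flow_value_scaled_xflow n K :
  flow_value ps (fun Q => x n Q / K) = sumR cst (seq 0 n) / K.
Proof.
  unfold flow_value.
  rewrite (sumR_ext _ (fun Q => (fun _ => / K) Q *
             sumR (fun j => if list_eq_dec eq_dec (Pst j) Q then cst j else 0) (seq 0 n)))
    by (intros Q _; unfold xflow, Rdiv; ring).
  rewrite sumR_regroup, sumR_scal by assumption. unfold Rdiv; ring.
Qed.

Lemma xflow_nonneg n Q : 0 <= x n Q.
Proof.
  apply sumR_nonneg. intros j _.
  destruct (list_eq_dec eq_dec (Pst j) Q); [apply minc_nonneg, Hc|lra].
Qed.

Lemma xflow_support n Q : ~ In Q ps -> x n Q = 0.
Proof.
  intros HQ. unfold xflow. transitivity (sumR (fun _ : nat => 0) (seq 0 n)); [|apply sumR_zero].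
  apply sumR_ext. intros j _.
  destruct (list_eq_dec eq_dec (Pst j) Q) as [<-|]; [exfalso; apply HQ, Hpaths_in|reflexivity].
Qed.

Lemma scaled_xflow_feasible tau : stops_at eq_dec c orc eps delta w tau ->
  feasible_Lflow eq_dec ps c
    (fun Q => x tau Q / log_base (1 + eps) ((1 + eps) * (1 + w) / delta)).
Proof.
  intros Hstop. set (K := log_base _ _).
  assert (HK : 0 < K).
  { unfold K, log_base. apply Rdiv_lt_0_compat; rewrite <- ln_1; apply ln_increasing; try lra.
    apply (Rmult_lt_reg_r delta); [exact Hdelta|]. field_simplify; lra. }
  split; [|split].
  - intros Q HQ. destruct (in_dec (list_eq_dec eq_dec) Q ps) as [|Hout]; [assumption|].
    exfalso; apply HQ. rewrite xflow_support by exact Hout. unfold Rdiv; ring.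
  - intros Q _. unfold Rdiv. apply Rmult_le_pos; [apply xflow_nonneg|left; apply Rinv_0_lt_compat, HK].
  - intros e. rewrite load_scaled_xflow.
    replace (c e) with (c e * K / K) by (field; lra).
    apply Rmult_le_compat_r; [left; apply Rinv_0_lt_compat, HK|].
    apply edge_flow_le_capacity, stops_at_running, Hstop.
Qed.

Variables (L : nat) (beta : R).
Hypothesis Hw : 0 <= w.
Hypothesis Hbeta : is_LP_opt es ps c beta.
Hypothesis Hps_len : forall Q, In Q ps -> (length Q <= L)%nat.
Hypothesis Horacle : forall i Q, In Q ps -> abar i <= (1 + w) * ypath (Y i) Q.

Definition excess_cost (i : nat) : R := dual_cost es c (fun e => Y i e - delta).

Lemma excess_cost_nonneg i : 0 <= excess_cost i.
Proof.
  apply sumR_nonneg. intros e _. pose proof (yseq_ge_delta i e).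
  apply Rmult_le_pos; [left; apply Hc|lra].
Qed.

Lemma excess_cost_0 : excess_cost 0 = 0.
Proof.
  unfold excess_cost, dual_cost. transitivity (sumR (fun _ : E => 0) es); [|apply sumR_zero].
  apply sumR_ext.
  intros e _. simpl; ring.
Qed.

Lemma excess_cost_S i : excess_cost (S i) <= excess_cost i + eps * cst i * abar i.
Proof.
  unfold excess_cost, dual_cost.
  rewrite (sumR_ext _ (fun e => c e * (Y i e - delta) +
             eps * cst i * (if in_dec eq_dec e (Pst i) then Y i e else 0))).
  2:{ intros e _. rewrite yseq_S. pose proof (Hc e).
      destruct (in_dec eq_dec e (Pst i)); [field; lra|ring]. }
  rewrite sumR_plus, sumR_scal.
  pose proof (sumR_indicator_le eq_dec (Y i) es (Pst i) (yseq_nonneg i) Hes_nodup) as Hind.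
  pose proof (minc_nonneg c (Pst i) Hc : 0 <= cst i).
  apply (Rmult_le_compat_l (eps * cst i)) in Hind; [|apply Rmult_le_pos; lra].
  unfold alphabar, ypath. fold (Pst i). lra.
Qed.

Lemma paths_list_nonempty : ps <> [].
Proof. intros Hnil. pose proof (Hpaths_in 0) as H0. rewrite Hnil in H0. destruct H0. Qed.

Lemma beta_pos : 0 < beta.
Proof. exact (LP_opt_pos es ps c beta Hes_full Hc Hbeta paths_list_nonempty). Qed.

Definition dual_bound (i : nat) : R := delta * INR L + excess_cost i / beta.

Lemma dual_bound_nonneg i : 0 <= dual_bound i.
Proof.
  pose proof beta_pos. pose proof (excess_cost_nonneg i).
  assert (0 <= INR L) by apply pos_INR.
  assert (0 <= excess_cost i / beta)
    by (unfold Rdiv; apply Rmult_le_pos; [lra|left; apply Rinv_0_lt_compat; lra]).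
  unfold dual_bound. nra.
Qed.

Lemma alphabar_le_dual_bound i : abar i <= (1 + w) * dual_bound i.
Proof.
  pose proof beta_pos as Hb.
  destruct (LP_opt_shortest_path_le es ps c beta Hc Hbeta paths_list_nonempty (fun e => Y i e - delta))
    as [Q [HQ HbQ]].
  { intros e; pose proof (yseq_ge_delta i e); lra. }
  fold (excess_cost i) in HbQ.
  assert (HzQ : ypath (fun e => Y i e - delta) Q = ypath (Y i) Q - delta * INR (length Q)).
  { unfold ypath. rewrite (sumR_ext _ (fun e => Y i e + (fun _ => - delta) e)) by (intros; ring).
    rewrite sumR_plus, sumR_const. ring. }
  assert (HlenQ : INR (length Q) <= INR L) by (apply le_INR, Hps_len, HQ).
  assert (HyQ : ypath (Y i) Q <= dual_bound i).
  { unfold dual_bound. apply (Rmult_le_reg_l beta); [exact Hb|]. rewrite Rmult_plus_distr_l.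
    replace (beta * (excess_cost i / beta)) with (excess_cost i) by (field; lra).
    rewrite HzQ in HbQ. apply (Rmult_le_compat_l beta) in HlenQ; [|lra].
    apply (Rmult_le_compat_l delta) in HlenQ; [|lra]. nra. }
  apply Rle_trans with ((1 + w) * ypath (Y i) Q); [apply Horacle, HQ|].
  apply Rmult_le_compat_l; lra.
Qed.

Lemma dual_bound_S i : dual_bound (S i) <= dual_bound i * (1 + eps * (1 + w) / beta * cst i).
Proof.
  pose proof beta_pos as Hb.
  pose proof (excess_cost_S i). pose proof (alphabar_le_dual_bound i).
  pose proof (minc_nonneg c (Pst i) Hc : 0 <= cst i).
  assert (Hstep : eps * cst i * abar i <= eps * cst i * ((1 + w) * dual_bound i))
    by (apply Rmult_le_compat_l; [apply Rmult_le_pos|]; lra).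
  assert (Hexc : excess_cost (S i) / beta <=
                 excess_cost i / beta + eps * cst i * ((1 + w) * dual_bound i) / beta).
  { unfold Rdiv. rewrite <- Rmult_plus_distr_r.
    apply Rmult_le_compat_r; [left; apply Rinv_0_lt_compat, Hb|lra]. }
  replace (dual_bound i * (1 + eps * (1 + w) / beta * cst i))
    with (dual_bound i + eps * cst i * ((1 + w) * dual_bound i) / beta) by (field; lra).
  unfold dual_bound in *. lra.
Qed.

Lemma dual_bound_le_exp n :
  dual_bound n <= delta * INR L * exp (eps * (1 + w) / beta * sumR cst (seq 0 n)).
Proof.
  pose proof beta_pos.
  replace (delta * INR L) with (dual_bound 0)
    by (unfold dual_bound; rewrite excess_cost_0; field; lra).
  rewrite <- sumR_scal. apply growth_le_exp; [exact dual_bound_nonneg|exact dual_bound_S].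
Qed.

Lemma total_routed_ge n : 1 + w <= abar n ->
  - ln (delta * INR L) * beta <= eps * (1 + w) * sumR cst (seq 0 n).
Proof.
  intros Hend. pose proof beta_pos as Hb.
  set (A := eps * (1 + w) / beta). set (f := sumR cst (seq 0 n)).
  pose proof (alphabar_le_dual_bound n). pose proof (dual_bound_le_exp n) as Hgrow.
  fold A f in Hgrow. pose proof (exp_pos (A * f)).
  assert (H1 : 1 <= delta * INR L * exp (A * f))
    by (apply (Rmult_le_reg_l (1 + w)); [lra|]; nra).
  assert (HdL0 : 0 <= delta * INR L) by (apply Rmult_le_pos; [lra|apply pos_INR]).
  assert (HdL : 0 < delta * INR L)
    by (destruct HdL0 as [|HdL0]; [assumption|rewrite <- HdL0 in H1; lra]).
  apply ln_le in H1; [|lra]. rewrite ln_1, ln_mult, ln_exp in H1 by lra.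
  apply (Rmult_le_compat_r beta) in H1; [|lra].
  replace ((ln (delta * INR L) + A * f) * beta) with (ln (delta * INR L) * beta + eps * (1 + w) * f)
    in H1 by (unfold A; field; lra).
  lra.
Qed.

End ApproxGeneral.

Theorem mainTheorem6
  (V E : Type) (eq_dec : forall a b : E, {a = b} + {a <> b})
  (src tgt : E -> V) (es : list E) (c : E -> R) (len : E -> nat)
  (s t : V) (L : nat) (ps : list (list E))
  (orc : (E -> R) -> list E) (eps w delta beta : R)
  (Hes_nodup : NoDup es) (Hes_full : forall e : E, In e es)
  (Hc : forall e, 0 < c e) (Hlen : forall e, (1 <= len e)%nat)
  (Hst : s <> t) (HL : (1 <= L)%nat)
  (Hps_nodup : NoDup ps)
  (Hps : forall P, In P ps <-> inPL src tgt len s t L P)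
  (Hne : exists P, inPL src tgt len s t L P)
  (Heps : 0 < eps <= 1 / 3) (Hw : w = eps)
  (Hdelta : delta = (1 + eps) * (1 + w) /
                    Rpower ((1 + eps) * (1 + w) * INR L) (1 / eps))
  (HO : approx_oracle (inPL src tgt len s t L) w orc)
  (Hbeta : is_LP_opt es ps c beta) :
  let K := log_base (1 + eps) ((1 + eps) * (1 + w) / delta) in
  exists tau : nat,
    stops_at eq_dec c orc eps delta w tau /\
    INR tau <= INR (length es) * IZR (ceilR K) /\
    feasible_Lflow eq_dec ps c (fun P => xflow eq_dec c orc eps delta tau P / K) /\
    beta / (1 + 5 * eps) <= flow_value ps (fun P => xflow eq_dec c orc eps delta tau P / K).
Proof.
  intros K. subst w. destruct Heps as [Heps0 Heps13].
  assert (HC : 1 < (1 + eps) * (1 + eps)) by nra.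
  destruct (delta_choice _ _ _ L HC Heps0 HL Hdelta) as [Hd0 [HdC [HlnX [HlnCd HlnL]]]].
  assert (Horc : forall i, inPL src tgt len s t L (Pstep eq_dec c orc eps delta i) /\
            forall Q, inPL src tgt len s t L Q ->
            alphabar eq_dec c orc eps delta i <= (1 + eps) * ypath (yseq eq_dec c orc eps delta i) Q)
    by (intros i; apply HO, (yseq_nonneg eq_dec c orc eps delta Hc Heps0 Hd0)).
  assert (Hin : forall i, In (Pstep eq_dec c orc eps delta i) ps) by (intros i; apply Hps, Horc).
  assert (Hnonempty : forall i, Pstep eq_dec c orc eps delta i <> [])
    by (intros i; apply (inPL_nonempty src tgt len s t L); [exact Hst|apply Horc]).
  assert (Hopt : forall i Q, In Q ps ->
            alphabar eq_dec c orc eps delta i <= (1 + eps) * ypath (yseq eq_dec c orc eps delta i) Q)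
    by (intros i Q HQ; apply Horc, Hps, HQ).
  assert (Hlength : forall Q, In Q ps -> (length Q <= L)%nat)
    by (intros Q HQ; apply (inPL_length src tgt len s t); [exact Hlen|apply Hps, HQ]).
  destruct (approx_general_stops eq_dec es c orc eps eps delta) as [tau Hstop]; auto.
  exists tau. split; [exact Hstop|split; [|split]].
  - eapply iterations_le_ceil; eauto.
  - eapply scaled_xflow_feasible; eauto.
  - rewrite flow_value_scaled_xflow by assumption.
    unfold K, log_base. rewrite HlnCd.
    apply scaled_value_bound; [eapply beta_pos; eauto|lra|exact HlnX|].
    apply Rle_trans with (- ln (delta * INR L) * beta); [rewrite HlnL; lra|].
    destruct Hstop as [Hend _]. eapply total_routed_ge; eauto; lra.
Qed.
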